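(* Let $\lambda>0$, $\lambda_{max}>0$ and $p\in(0,1]$. For $q\in(0,1]$ let $r(q)=\min\{p/q,1\}$ (so $r(q)q=\min\{p,q\}$, and set $r(0)\cdot 0=0$), and for $q,\tilde q\in[0,1]$ let $$\mathrm{TH}(q,\tilde q)=r(q)\,q\,\exp\!\Big(-\frac{\lambda\, r(\tilde q)\,\tilde q}{\lambda_{max}}\Big).$$ Call $q^*\in[0,1]$ a symmetric Nash equilibrium (SNE) if $\mathrm{TH}(q^*,q^* )=\max_{q\in[0,1]}\mathrm{TH}(q,q^* )$. Then every $q^*$ with $p\le q^*\le 1$ is an SNE. Moreover, at any SNE $q^*$, $\mathrm{TH}(q^*,q^* )=p\exp\!\big(-\frac{p\lambda}{\lambda_{max}}\big)$, and the transmission capacity $C=\lambda\,\mathrm{TH}(q^*,q^* )$ equals $\lambda p\exp\!\big(-\frac{p\lambda}{\lambda_{max}}\big)$.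
   Context: Game-theoretic ALOHA model with infinite battery capacity: transmitters form a homogeneous Poisson point process of density $\lambda$ in $\mathbb{R}^2$; each harvests one energy unit per slot with probability $p$ and, when its battery is nonempty, transmits with its own probability. $\mathrm{TH}(q,\tilde q)$ is the throughput of a transmitter using transmission probability $q$ when all other transmitters use $\tilde q$; $r(q)$ is the stationary probability of a nonempty battery; $\lambda_{max}=\frac{1}{d^2\theta^{2/\alpha}\kappa(\alpha)}$ with $\kappa(\alpha)=\frac{2\pi^2}{\alpha\sin(2\pi/\alpha)}$. *)

From Stdlib Require Import Reals.
Open Scope R_scope.

(* r(q) = min{p/q, 1}, the stationary probability of a nonempty battery
   (meaningful for q in (0,1]). *)
Definition r_batt (p q : R) : R := Rmin (p / q) 1.

Definition rq (p q : R) : R :=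
  if Req_EM_T q 0 then 0 else r_batt p q * q.

Definition TH (lam lmax p q qt : R) : R :=
  rq p q * exp (- (lam * rq p qt / lmax)).

(* qs is a symmetric Nash equilibrium: qs in [0,1] and
   TH(qs,qs) = max_{q in [0,1]} TH(q,qs) (qs itself is in [0,1], so this
   says TH(qs,qs) is an upper bound of {TH(q,qs) | q in [0,1]}). *)
Definition SNE (lam lmax p qs : R) : Prop :=
  0 <= qs <= 1 /\
  forall q, 0 <= q <= 1 -> TH lam lmax p q qs <= TH lam lmax p qs qs.

Definition capacity (lam lmax p qs : R) : R := lam * TH lam lmax p qs qs.

(* Since r(q) q = min(p, q), TH(q, q') = min(p, q) exp(-lambda min(p, q') / lambda_max).
   The own-strategy factor min(p, q) is maximised exactly by the q >= p, so every
   qs >= p is an SNE, while any qs < p is beaten by the deviation q = p.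
   Hence min(p, qs) = p at every SNE, which fixes TH(qs, qs). *)
From Stdlib Require Import Reals Lra.
Open Scope R_scope.

Lemma r_batt_mul_ge p q : 0 < q -> p <= q -> r_batt p q * q = p.
Proof.
  intros Hq Hpq. unfold r_batt.
  rewrite Rmin_left; [field; lra|].
  apply Rmult_le_reg_r with q; [lra|].
  unfold Rdiv. rewrite Rmult_assoc, Rinv_l by lra. lra.
Qed.

Lemma r_batt_mul_lt p q : 0 < q -> q < p -> r_batt p q * q = q.
Proof.
  intros Hq Hqp. unfold r_batt.
  rewrite Rmin_right; [lra|].
  apply Rmult_le_reg_r with q; [lra|].
  unfold Rdiv. rewrite Rmult_assoc, Rinv_l by lra. lra.
Qed.

Lemma rq_min p q : 0 < p -> 0 <= q -> rq p q = Rmin p q.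
Proof.
  intros Hp Hq. unfold rq.
  destruct (Req_EM_T q 0) as [->|Hq0]; [rewrite Rmin_right; lra|].
  destruct (Rle_dec p q) as [Hpq|Hqp].
  - rewrite Rmin_left by lra. apply r_batt_mul_ge; lra.
  - rewrite Rmin_right by lra. apply r_batt_mul_lt; lra.
Qed.

Lemma TH_min (lam lmax p q qt : R) : 0 < p -> 0 <= q -> 0 <= qt ->
  TH lam lmax p q qt = Rmin p q * exp (- (lam * Rmin p qt / lmax)).
Proof. intros Hp Hq Hqt. unfold TH. rewrite !rq_min by lra. reflexivity. Qed.

Lemma TH_le_of_ge_p (lam lmax p q qs : R) : 0 < p -> 0 <= q -> p <= qs ->
  TH lam lmax p q qs <= TH lam lmax p qs qs.
Proof.
  intros Hp Hq Hpqs. rewrite !TH_min by lra.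
  apply Rmult_le_compat_r; [apply Rlt_le, exp_pos|].
  rewrite (Rmin_left p qs) by lra. apply Rmin_l.
Qed.

Lemma SNE_ge_p (lam lmax p qs : R) : 0 < p <= 1 ->
  SNE lam lmax p qs -> p <= qs.
Proof.
  intros Hp [Hqs Hbest].
  destruct (Rle_dec p qs) as [Hpqs|Hqsp]; [exact Hpqs|exfalso].
  specialize (Hbest p ltac:(lra)). rewrite !TH_min in Hbest by lra.
  rewrite Rmin_left, Rmin_right in Hbest by lra.
  pose proof (exp_pos (- (lam * qs / lmax))). nra.
Qed.

Lemma TH_diag_of_ge_p (lam lmax p qs : R) : 0 < p -> p <= qs ->
  TH lam lmax p qs qs = p * exp (- (p * lam / lmax)).
Proof.
  intros Hp Hpqs. rewrite TH_min, Rmin_left by lra.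
  do 2 f_equal. unfold Rdiv. ring.
Qed.

Theorem theorem3 (lam lmax p : R) :
  0 < lam -> 0 < lmax -> 0 < p <= 1 ->
  (forall qs, p <= qs <= 1 -> SNE lam lmax p qs) /\
  (forall qs, SNE lam lmax p qs ->
     TH lam lmax p qs qs = p * exp (- (p * lam / lmax)) /\
     capacity lam lmax p qs = lam * p * exp (- (p * lam / lmax))).
Proof.
  intros Hlam Hlmax Hp. split.
  - intros qs Hqs. split; [lra|].
    intros q Hq. apply TH_le_of_ge_p; lra.
  - intros qs Hsne.
    pose proof (SNE_ge_p lam lmax p qs Hp Hsne) as Hpqs.
    pose proof (TH_diag_of_ge_p lam lmax p qs ltac:(lra) Hpqs) as Hdiag.
    split; [exact Hdiag|].
    unfold capacity. rewrite Hdiag. ring.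
Qed.
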